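(* Let $x_0\in\mathbb{R}^n$, $A\in\mathbb{R}^{n\times n}$, $C\in\mathbb{R}^{1\times n}$ and $\mathbf{y}\in\mathbb{R}[\mathfrak{q},\mathfrak{q}^*]$. If $$w=(Cx_0,\ CAx_0,\ CA^2x_0,\ \ldots)\in\ell_{2+},$$ then there exist $m\in\mathbb{N}$, $\bar x_0\in\mathbb{R}^m$, $\bar A\in\mathbb{R}^{m\times m}$ and $\bar C\in\mathbb{R}^{1\times m}$ such that $$\mathbf{y}w=(\bar C\bar x_0,\ \bar C\bar A\bar x_0,\ \bar C\bar A^2\bar x_0,\ \ldots)\in\ell_{2+}.$$
   Context: $\ell_{2+}$ is the space of square-summable real sequences $(y[0],y[1],\ldots)$. The forward shift is $\mathfrak{q}:(y[0],y[1],\ldots)\mapsto(y[1],y[2],\ldots)$ and its adjoint is $\mathfrak{q}^*:(y[0],y[1],\ldots)\mapsto(0,y[0],y[1],\ldots)$. $\mathbb{R}[\mathfrak{q},\mathfrak{q}^*]=\{\sum_{i=0}^{N-1}\sum_{j=0}^{N-1}\alpha_{ij}(\mathfrak{q}^* )^i\mathfrak{q}^j : N\in\mathbb{N},\ \alpha_{ij}\in\mathbb{R}\}$, operators acting on $\ell_{2+}$. *)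

From HB Require Import structures.
From mathcomp Require Import all_boot all_order all_algebra.
From mathcomp Require Import all_classical all_reals all_analysis.
Set Implicit Arguments. Unset Strict Implicit. Unset Printing Implicit Defensive.
Import Order.TTheory GRing.Theory Num.Theory.
Local Open Scope ring_scope.

Definition in_l2p (R : realType) (u : nat -> R) : Prop :=
  cvgn (series (fun k => u k ^+ 2 : R^o)).

Definition fshift (R : realType) (u : nat -> R) : nat -> R := fun k => u k.+1.

Definition bshift (R : realType) (u : nat -> R) : nat -> R :=
  fun k => if k is k'.+1 then u k' else 0.

(* the operator sum_{i,j<N} alpha_ij (q^* )^i q^j of R[q,q^*],
   given by N and its coefficient matrix alpha, applied to u *)
Definition qpoly_apply (R : realType) (N : nat) (alpha : 'M[R]_N)
  (u : nat -> R) : nat -> R :=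
  fun k => \sum_(i < N) \sum_(j < N)
             alpha i j * iter i (@bshift R) (iter j (@fshift R) u) k.

Definition lti_output (R : realType) (n : nat) (x0 : 'cV[R]_n)
  (A : 'M[R]_n) (C : 'rV[R]_n) : nat -> R :=
  fun k => (C *m (A ^+ k) *m x0) 0 0.

(* Both the sequences [k |-> C A^k x0] and the square-summable sequences form
   vector spaces closed under the two shifts: [q] replaces [x0] by [A x0], and
   [q^*] is realised by adding one state coordinate that is emptied into the
   old state at the first step.  Every element of R[q,q^*] is a linear
   combination of products of shifts, so it preserves both properties. *)

From HB Require Import structures.
From mathcomp Require Import all_boot all_order all_algebra.
From mathcomp Require Import all_classical all_reals all_analysis.
From mathcomp Require Import lra.
Set Implicit Arguments. Unset Strict Implicit. Unset Printing Implicit Defensive.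
Import Order.TTheory GRing.Theory Num.Theory.
Local Open Scope ring_scope.

Lemma expmx_block_diag (R : pzRingType) m1 m2 (A1 : 'M[R]_m1) (A2 : 'M[R]_m2) k :
  (block_mx A1 0 0 A2) ^+ k = block_mx (A1 ^+ k) 0 0 (A2 ^+ k).
Proof.
elim: k => [|k IHk]; first by rewrite !expr0 -scalar_mx_block.
by rewrite !exprS IHk -!mulmxE mulmx_block !mulmx0 !mul0mx !addr0 !add0r.
Qed.

Section ShiftAlgebraClosure.
Variable R : realType.
Variable S : (nat -> R) -> Prop.
Hypothesis S0 : S (fun _ => 0).
Hypothesis SD : forall u v, S u -> S v -> S (u \+ v).
Hypothesis SZ : forall c u, S u -> S (fun k => c * u k).
Hypothesis S_fshift : forall u, S u -> S (fshift u).
Hypothesis S_bshift : forall u, S u -> S (bshift u).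

Lemma closed_sum (I : Type) (r : seq I) (F : I -> nat -> R) :
  (forall i, S (F i)) -> S (fun k => \sum_(i <- r) F i k).
Proof.
move=> SF; elim: r => [|i r IHr].
  by under [fun k => _]funext do rewrite big_nil.
have -> : (fun k => \sum_(j <- i :: r) F j k) = F i \+ (fun k => \sum_(j <- r) F j k).
  by apply: funext => k; rewrite big_cons.
exact: SD.
Qed.

Lemma closed_qpoly_apply N (alpha : 'M[R]_N) u : S u -> S (qpoly_apply alpha u).
Proof.
move=> Su; apply: closed_sum => i; apply: closed_sum => j; apply: SZ.
elim: (i : nat) => [|{}i IHi] /=; last exact: S_bshift.
by elim: (j : nat) => [|{}j IHj] //=; exact: S_fshift.
Qed.

End ShiftAlgebraClosure.

Section LtiOutput.
Variable R : realType.

Definition lti_seq (u : nat -> R) :=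
  exists m (x : 'cV[R]_m) (A : 'M[R]_m) (C : 'rV[R]_m), u = lti_output x A C.

Lemma lti_output0 : (fun _ => 0) = lti_output (0 : 'cV[R]_0) 0 0.
Proof. by apply: funext => k; rewrite /lti_output mulmx0 mxE. Qed.

Lemma lti_outputD m1 m2 (x1 : 'cV[R]_m1) A1 C1 (x2 : 'cV[R]_m2) A2 C2 :
  lti_output x1 A1 C1 \+ lti_output x2 A2 C2 =
  lti_output (col_mx x1 x2) (block_mx A1 0 0 A2) (row_mx C1 C2).
Proof.
apply: funext => k.
rewrite /lti_output expmx_block_diag mul_row_block mul_row_col.
by rewrite !mulmx0 !addr0 add0r [RHS]mxE.
Qed.

Lemma lti_outputZ c m (x : 'cV[R]_m) A C :
  (fun k => c * lti_output x A C k) = lti_output (c *: x) A C.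
Proof. by apply: funext => k; rewrite /lti_output -scalemxAr [RHS]mxE. Qed.

Lemma fshift_lti_output m (x : 'cV[R]_m) A C :
  fshift (lti_output x A C) = lti_output (A *m x) A C.
Proof. by apply: funext => k; rewrite /fshift /lti_output exprSr -mulmxE !mulmxA. Qed.

Lemma bshift_lti_output m (x : 'cV[R]_m) A C :
  bshift (lti_output x A C) =
  lti_output (col_mx 1 0 : 'cV_(1 + m)) (block_mx 0 0 x A) (row_mx 0 C).
Proof.
set Ab := block_mx _ _ _ _.
have ApowS k : Ab ^+ k.+1 *m col_mx 1 0 = col_mx 0 (A ^+ k *m x).
  elim: k => [|k IHk].
    by rewrite expr1 mul_block_col !mul0mx !mulmx0 !addr0 mulmx1 expr0 mul1mx.
  rewrite exprS -mulmxE -mulmxA IHk mul_block_col !mulmx0 !mul0mx !addr0 add0r.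
  by rewrite exprS -mulmxE mulmxA.
apply: funext => -[|k]; rewrite /bshift /lti_output.
  by rewrite expr0 mulmx1 mul_row_col mul0mx mulmx0 addr0 mxE.
by rewrite -[in RHS]mulmxA ApowS mul_row_col mul0mx add0r mulmxA.
Qed.

Lemma lti_seq0 : lti_seq (fun _ => 0).
Proof. by exists 0%N, 0, 0, 0; exact: lti_output0. Qed.

Lemma lti_seqD u v : lti_seq u -> lti_seq v -> lti_seq (u \+ v).
Proof.
move=> [m1 [x1 [A1 [C1 ->]]]] [m2 [x2 [A2 [C2 ->]]]].
exists (m1 + m2)%N, (col_mx x1 x2), (block_mx A1 0 0 A2), (row_mx C1 C2).
exact: lti_outputD.
Qed.

Lemma lti_seqZ c u : lti_seq u -> lti_seq (fun k => c * u k).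
Proof. by move=> [m [x [A [C ->]]]]; exists m, (c *: x), A, C; exact: lti_outputZ. Qed.

Lemma lti_seq_fshift u : lti_seq u -> lti_seq (fshift u).
Proof.
by move=> [m [x [A [C ->]]]]; exists m, (A *m x), A, C; exact: fshift_lti_output.
Qed.

Lemma lti_seq_bshift u : lti_seq u -> lti_seq (bshift u).
Proof. by move=> [m [x [A [C ->]]]]; eexists _, _, _, _; exact: bshift_lti_output. Qed.

End LtiOutput.

Section SquareSummable.
Variable R : realType.
Implicit Types u v : nat -> R.

Lemma in_l2pP u :
  in_l2p u <-> exists M, forall n, \sum_(0 <= k < n) u k ^+ 2 <= M.
Proof.
have nd : nondecreasing_seq (series (fun k => u k ^+ 2 : R^o)).
  by apply: nondecreasing_series => k _ _; exact: sqr_ge0.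
split => [cu|[M leM]].
  by exists (limn (series (fun k => u k ^+ 2 : R^o))); exact: nondecreasing_cvgn_le.
by apply: nondecreasing_is_cvgn => //; exists M => _ [n _ <-]; exact: leM.
Qed.

Lemma in_l2p0 : in_l2p (fun _ : nat => 0 : R).
Proof. by apply/in_l2pP; exists 0 => n; rewrite big1 // => k _; rewrite expr0n. Qed.

Lemma in_l2pD u v : in_l2p u -> in_l2p v -> in_l2p (u \+ v).
Proof.
move=> /in_l2pP[M leM] /in_l2pP[N leN]; apply/in_l2pP; exists (2 * M + 2 * N) => n.
have sqrD_le k : (u k + v k) ^+ 2 <= 2 * u k ^+ 2 + 2 * v k ^+ 2.
  by have := sqr_ge0 (u k - v k); rewrite sqrrB sqrrD; lra.
rewrite (le_trans (ler_sum _ (fun k _ => sqrD_le k))) // big_split /= -!mulr_sumr.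
by have := leM n; have := leN n; lra.
Qed.

Lemma in_l2pZ c u : in_l2p u -> in_l2p (fun k => c * u k).
Proof.
move=> /in_l2pP[M leM]; apply/in_l2pP; exists (c ^+ 2 * M) => n.
under eq_bigr do rewrite exprMn.
by rewrite -mulr_sumr ler_wpM2l ?sqr_ge0.
Qed.

Lemma in_l2p_fshift u : in_l2p u -> in_l2p (fshift u).
Proof.
move=> /in_l2pP[M leM]; apply/in_l2pP; exists M => n; apply: le_trans (leM n.+1).
by rewrite big_nat_recl //= lerDr sqr_ge0.
Qed.

Lemma in_l2p_bshift u : in_l2p u -> in_l2p (bshift u).
Proof.
move=> /in_l2pP[M leM]; apply/in_l2pP; exists M => -[|n].
  by rewrite big_geq //; have := leM 0%N; rewrite big_geq.
by rewrite big_nat_recl //= expr0n add0r; exact: leM.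
Qed.

End SquareSummable.

Theorem lemma1 (R : realType) (n : nat) (x0 : 'cV[R]_n) (A : 'M[R]_n)
  (C : 'rV[R]_n) (N : nat) (alpha : 'M[R]_N) :
  in_l2p (lti_output x0 A C) ->
  exists (m : nat) (xb : 'cV[R]_m) (Ab : 'M[R]_m) (Cb : 'rV[R]_m),
    qpoly_apply alpha (lti_output x0 A C) = lti_output xb Ab Cb /\
    in_l2p (lti_output xb Ab Cb).
Proof.
move=> w_l2.
have w_lti : lti_seq (lti_output x0 A C) by exists n, x0, A, C.
have [m [xb [Ab [Cb yw_eq]]]] := closed_qpoly_apply (@lti_seq0 R) (@lti_seqD R)
  (@lti_seqZ R) (@lti_seq_fshift R) (@lti_seq_bshift R) alpha w_lti.
have yw_l2 := closed_qpoly_apply (@in_l2p0 R) (@in_l2pD R) (@in_l2pZ R)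
  (@in_l2p_fshift R) (@in_l2p_bshift R) alpha w_l2.
by exists m, xb, Ab, Cb; rewrite -yw_eq.
Qed.
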